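(* Every finite indecomposable non-degenerate solution $(X,r)$ of the Yang--Baxter equation with $|X|$ a prime number is simple.
   Context: A set-theoretic solution $(X,r)$: $X$ non-empty, $r\colon X\times X\to X\times X$ satisfying $(r\times\mathrm{id})(\mathrm{id}\times r)(r\times\mathrm{id})=(\mathrm{id}\times r)(r\times\mathrm{id})(\mathrm{id}\times r)$; write $r(x,y)=(\lambda_x(y),\rho_y(x))$; non-degenerate means $r$ bijective and all $\lambda_x,\rho_y$ bijective. $(X,r)$ is decomposable if $X=Y\cup Z$ with $Y,Z$ disjoint non-empty and $r(Y\times Y)\subseteq Y\times Y$, $r(Z\times Z)\subseteq Z\times Z$ with these restrictions being solutions; otherwise indecomposable. A morphism $f\colon(X,r)\to(Y,s)$ is a map with $(f\times f)r=s(f\times f)$; $(X,r)$ with $|X|>1$ is simple if every surjective morphism $(X,r)\to(Y,s)$ is bijective or has $|Y|=1$. *)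

From mathcomp Require Import all_boot.
Set Implicit Arguments. Unset Strict Implicit. Unset Printing Implicit Defensive.

(* A set-theoretic solution on a type X: r : X * X -> X * X satisfying the
   braid relation (r x id)(id x r)(r x id) = (id x r)(r x id)(id x r) on X^3. *)
Definition r12 {X : Type} (r : X * X -> X * X) (t : X * X * X) : X * X * X :=
  let: (x, y, z) := t in let: (a, b) := r (x, y) in (a, b, z).
Definition r23 {X : Type} (r : X * X -> X * X) (t : X * X * X) : X * X * X :=
  let: (x, y, z) := t in let: (a, b) := r (y, z) in (x, a, b).

Definition is_solution {X : Type} (r : X * X -> X * X) : Prop :=
  forall t, r12 r (r23 r (r12 r t)) = r23 r (r12 r (r23 r t)).

Definition lam {X : Type} (r : X * X -> X * X) (x y : X) : X := (r (x, y)).1.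
Definition rho {X : Type} (r : X * X -> X * X) (y x : X) : X := (r (x, y)).2.

Definition non_degenerate {X : Type} (r : X * X -> X * X) : Prop :=
  bijective r /\ (forall x, bijective (lam r x)) /\ (forall y, bijective (rho r y)).

Definition invariant_subsolution {X : Type} (r : X * X -> X * X) (Y : X -> Prop) : Prop :=
  (forall x y, Y x -> Y y -> Y (r (x, y)).1 /\ Y (r (x, y)).2) /\
  (forall x y z, Y x -> Y y -> Y z ->
     r12 r (r23 r (r12 r (x, y, z))) = r23 r (r12 r (r23 r (x, y, z)))).

Definition decomposable {X : Type} (r : X * X -> X * X) : Prop :=
  exists Y : X -> Prop,
    (exists y, Y y) /\ (exists z, ~ Y z) /\
    invariant_subsolution r Y /\ invariant_subsolution r (fun x => ~ Y x).

Definition indecomposable {X : Type} (r : X * X -> X * X) : Prop :=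
  ~ decomposable r.

Definition is_morphism {X Y : Type} (r : X * X -> X * X) (s : Y * Y -> Y * Y)
  (f : X -> Y) : Prop :=
  forall x y, (f (r (x, y)).1, f (r (x, y)).2) = s (f x, f y).

Definition surjective {X Y : Type} (f : X -> Y) : Prop := forall y, exists x, f x = y.

Definition simple_solution (X : finType) (r : X * X -> X * X) : Prop :=
  1 < #|X| /\
  forall (Y : Type) (s : Y * Y -> Y * Y) (f : X -> Y),
    is_solution s -> is_morphism r s f -> surjective f ->
    bijective f \/ (exists y0 : Y, forall y : Y, y = y0).

(* Each bijection lam a (resp. rho b) maps
   the fibre of x injectively into the fibre of its image, so fibre sizes never
   decrease along lam and rho.  Indecomposability makes X a single orbit under
   these maps, hence all fibres have one common size m, and m divides |X|.  For
   |X| prime either m = 1, so f is bijective, or m = |X|, so f is constant. *)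

From mathcomp Require Import all_boot boolp.

Set Implicit Arguments.
Unset Strict Implicit.
Unset Printing Implicit Defensive.

Lemma inj_closed_compl (T : finType) (g : T -> T) (O : {set T}) :
  injective g -> {homo g : u / u \in O} -> {homo g : u / u \notin O}.
Proof.
move=> g_inj gO u; apply: contra => gu_in_O.
have sub_gO : g @: O \subset O by apply/subsetP=> _ /imsetP[v vO ->]; exact: gO.
have eq_gO : g @: O = O.
  by apply/eqP; rewrite eqEcard sub_gO (card_imset _ g_inj) leqnn.
by rewrite -eq_gO (mem_imset _ _ g_inj) in gu_in_O.
Qed.

Lemma closed_invariant_subsolution (X : Type) (r : X * X -> X * X)
    (O : X -> Prop) :
  is_solution r -> (forall a u, O u -> O (lam r a u)) ->
  (forall b u, O u -> O (rho r b u)) -> invariant_subsolution r O.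
Proof.
move=> sol lamO rhoO; split=> [x y Ox Oy | x y z _ _ _]; last exact: sol.
by split; [apply: lamO | apply: rhoO].
Qed.

Definition lamrho_rel (X : finType) (r : X * X -> X * X) : rel X :=
  fun x y => [exists a, y == lam r a x] || [exists b, y == rho r b x].

Lemma indecomposable_connect (X : finType) (r : X * X -> X * X) x y :
  is_solution r -> non_degenerate r -> indecomposable r ->
  connect (lamrho_rel r) x y.
Proof.
move=> sol [_ [lam_bij rho_bij]] indec; apply/negPn/negP => not_xy.
apply: indec; pose O := [set v | connect (lamrho_rel r) x v].
have closedO u v : u \in O -> lamrho_rel r u v -> v \in O.
  by rewrite !inE => xu uv; apply: connect_trans xu (connect1 uv).
have lamO a u : u \in O -> lam r a u \in O.
  by move/closedO; apply; apply/orP; left; apply/existsP; exists a.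
have rhoO b u : u \in O -> rho r b u \in O.
  by move/closedO; apply; apply/orP; right; apply/existsP; exists b.
exists (fun v => v \in O); split; first by exists x; rewrite inE connect0.
split; first by exists y; rewrite inE; apply/negP.
split; apply: closed_invariant_subsolution => // [a u|b u].
- by move/negP/(inj_closed_compl (bij_inj (lam_bij a)) (lamO a))/negP.
- by move/negP/(inj_closed_compl (bij_inj (rho_bij b)) (rhoO b))/negP.
Qed.

Lemma connect_homo (T : finType) (e : rel T) (c : T -> nat) :
  {homo c : x y / e x y >-> x <= y} -> {homo c : x y / connect e x y >-> x <= y}.
Proof.
move=> c_homo x _ /connectP[p e_p ->].
elim: p x e_p => //= y p IHp x /andP[xy e_p].
exact: leq_trans (c_homo _ _ xy) (IHp _ e_p).
Qed.

Section Fibres.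

Variables (X : finType) (Y : Type) (f : X -> Y).

Definition fibre (x : X) : {set X} := [set y | `[< f y = f x >]].

Lemma mem_fibre x y : (y \in fibre x) = `[< f y = f x >].
Proof. by rewrite inE. Qed.

Lemma fibre_card_le (g : X -> X) x :
  injective g -> (forall y z, f y = f z -> f (g y) = f (g z)) ->
  #|fibre x| <= #|fibre (g x)|.
Proof.
move=> g_inj g_kerf; rewrite -(card_imset _ g_inj); apply/subset_leq_card.
apply/subsetP => _ /imsetP[y + ->]; rewrite !mem_fibre => /asboolP fy.
exact/asboolP/g_kerf.
Qed.

Lemma uniform_fibres_dvdn m : (forall x, #|fibre x| = m) -> m %| #|X|.
Proof.
move=> fibre_m; pose kerf x y := `[< f x = f y >].
have kerf_equiv : {in [set: X] & &, equivalence_rel kerf}.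
  move=> x y z _ _ _; split; first exact/asboolP.
  by move=> /asboolP fxy; apply/asboolP/asboolP => <-.
rewrite -cardsT (@card_uniform_partition _ m _ _ _ (equivalence_partitionP kerf_equiv)).
  exact: dvdn_mull.
move=> _ /imsetP[x _ ->]; rewrite -(fibre_m x); apply: eq_card => y.
by rewrite !inE; apply/asboolP/asboolP.
Qed.

Lemma fibres_card1_inj : (forall x, #|fibre x| = 1) -> injective f.
Proof.
move=> fibre1 x y fxy; have /cards1P[z fibre_z] : #|fibre x| == 1 by rewrite fibre1.
have : x \in fibre x by rewrite mem_fibre; exact/asboolP.
have : y \in fibre x by rewrite mem_fibre; exact/asboolP.
by rewrite fibre_z !inE => /eqP -> /eqP ->.
Qed.

Lemma fibres_full_const : (forall x, #|fibre x| = #|X|) -> forall x y, f x = f y.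
Proof.
move=> fibre_full x y.
have /eqP fibre_setT : fibre x == [set: X].
  by rewrite eqEcard subsetT cardsT fibre_full leqnn.
by have := in_setT y; rewrite -fibre_setT mem_fibre => /asboolP ->.
Qed.

End Fibres.

Lemma inj_surjective_bijective (A B : Type) (f : A -> B) :
  injective f -> surjective f -> bijective f.
Proof.
move=> f_inj f_surj; exists (fun b => sval (cid (f_surj b))) => [a|b].
- by apply: f_inj; case: cid.
- by case: cid.
Qed.

Section Morphisms.

Variables (X Y : Type) (r : X * X -> X * X) (s : Y * Y -> Y * Y) (f : X -> Y).
Hypothesis f_mor : is_morphism r s f.

Lemma morphism_lam a x : f (lam r a x) = lam s (f a) (f x).
Proof. by rewrite /lam -f_mor. Qed.

Lemma morphism_rho b x : f (rho r b x) = rho s (f b) (f x).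
Proof. by rewrite /rho -f_mor. Qed.

End Morphisms.

Lemma morphism_fibres_uniform (X : finType) (Y : Type) (r : X * X -> X * X)
    (s : Y * Y -> Y * Y) (f : X -> Y) x y :
  is_solution r -> non_degenerate r -> indecomposable r -> is_morphism r s f ->
  #|fibre f x| = #|fibre f y|.
Proof.
move=> sol nd indec f_mor; have [_ [lam_bij rho_bij]] := nd.
have step : {homo (fun x => #|fibre f x|) : u v / lamrho_rel r u v >-> u <= v}.
  move=> u _ /orP[] /existsP[a /eqP ->]; apply: fibre_card_le.
  - exact: bij_inj (lam_bij a).
  - by move=> v w fvw; rewrite !(morphism_lam f_mor) fvw.
  - exact: bij_inj (rho_bij a).
  - by move=> v w fvw; rewrite !(morphism_rho f_mor) fvw.
by apply/eqP; rewrite eqn_leq !(connect_homo step) ?indecomposable_connect.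
Qed.

Theorem mainTheorem9 (X : finType) (r : X * X -> X * X) :
  is_solution r -> non_degenerate r -> indecomposable r -> prime #|X| ->
  simple_solution r.
Proof.
move=> sol nd indec X_prime; split; first exact: prime_gt1.
move=> Y s f _ f_mor f_surj.
have [x0 _] : exists x0 : X, x0 \in predT by apply/card_gt0P; exact: prime_gt0.
have fibre_m x : #|fibre f x| = #|fibre f x0|.
  exact: morphism_fibres_uniform sol nd indec f_mor.
have m_dvd : #|fibre f x0| %| #|X| := uniform_fibres_dvdn fibre_m.
have [m1 | mX] := orP ((primeP X_prime).2 _ m_dvd).
- left; apply: inj_surjective_bijective f_surj.
  by apply: fibres_card1_inj => x; rewrite fibre_m (eqP m1).
- right; exists (f x0) => y; have [x <-] := f_surj y.
  by apply: fibres_full_const => z; rewrite fibre_m (eqP mX).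
Qed.
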